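(* In the group \(\mathcal{G}\) described below, let \(i,j,k\in\{1,\dots,14\}\) be indices whose images \(\bar i,\bar j,\bar k\) under the map \(m\mapsto m\) for \(m\le 7\), \(m\mapsto m-7\) for \(m\ge 8\), are three distinct collinear points of the Fano plane. Then there exists \(\gamma_{i,j,k}\in\mathcal{N}\) with \(\gamma_{i,j,k}=t_it_jt_kt_it_j\).
   Context: Let \(\mathcal{G}=\langle x,y,t \mid x^7, y^2, (xy)^3, [x,y]^4, t^2, [t^{x^2},yx^{-1}], [t,y], (yt^{x^2})^5, (xyx^2t^x)^5, (xt)^8\rangle\), with \(a^g=g^{-1}ag\), \([a,b]=a^{-1}b^{-1}ab\). Let \(\mathcal{N}=\langle x,y\rangle\le\mathcal{G}\); it acts on \(\{1,\dots,14\}\) on the right via \(x\mapsto(1,2,3,4,5,6,7)(8,9,10,11,12,13,14)\), \(y\mapsto(1,12)(2,3)(4,11)(5,8)(6,13)(9,10)\). Put \(t_7=t\) and \(t_i=t^g\) for any \(g\in\mathcal{N}\) mapping \(7\) to \(i\). The Fano plane has points \(1,\dots,7\) and lines \(\{7,1,5\},\{1,2,6\},\{2,3,7\},\{3,4,1\},\{4,5,2\},\{5,6,3\},\{6,7,4\}\); the point \(m\) and the index \(m+7\) lie over the same point. *)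

From mathcomp Require Import all_boot.
Set Implicit Arguments. Unset Strict Implicit. Unset Printing Implicit Defensive.

Record group := Group {
  carrier :> Type;
  gmul : carrier -> carrier -> carrier;
  ginv : carrier -> carrier;
  gone : carrier;
  gmulA : forall a b c, gmul a (gmul b c) = gmul (gmul a b) c;
  gmul1 : forall a, gmul gone a = a;
  gmulV : forall a, gmul (ginv a) a = gone
}.

Section GroupOps.
Variable G : group.
Definition gexp (a : G) (n : nat) : G := iter n (gmul a) (gone G).
Definition gconj (a g : G) : G := gmul (gmul (ginv g) a) g.
Definition gcomm (a b : G) : G := gmul (gmul (gmul (ginv a) (ginv b)) a) b.

Definition G_relations (x y t : G) : Prop :=
  gexp x 7 = gone G /\ gexp y 2 = gone G /\ gexp (gmul x y) 3 = gone G /\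
  gexp (gcomm x y) 4 = gone G /\ gexp t 2 = gone G /\
  gcomm (gconj t (gexp x 2)) (gmul y (ginv x)) = gone G /\
  gcomm t y = gone G /\
  gexp (gmul y (gconj t (gexp x 2))) 5 = gone G /\
  gexp (gmul (gmul (gmul x y) (gexp x 2)) (gconj t x)) 5 = gone G /\
  gexp (gmul x t) 8 = gone G.
End GroupOps.

(* Words in the generators x, y of N: a letter is (is_x, inverted).
   (true,b) = x^{+-1}, (false,b) = y^{+-1}; read left to right. *)
Definition letter := (bool * bool)%type.
Definition word := seq letter.

Definition eval_letter (G : group) (x y : G) (l : letter) : G :=
  let g := if l.1 then x else y in if l.2 then ginv g else g.
Definition eval_word (G : group) (x y : G) (w : word) : G :=
  foldl (fun acc l => gmul acc (eval_letter x y l)) (gone G) w.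

(* The permutation action of N on {1,...,14} (right action). *)
Definition px (p : nat) : nat :=
  if (1 <= p <= 6)%N then p.+1 else if p == 7 then 1
  else if (8 <= p <= 13)%N then p.+1 else if p == 14 then 8 else p.
Definition px_inv (p : nat) : nat :=
  if (2 <= p <= 7)%N then p.-1 else if p == 1 then 7
  else if (9 <= p <= 14)%N then p.-1 else if p == 8 then 14 else p.
Definition py (p : nat) : nat :=
  match p with
  | 1 => 12 | 12 => 1 | 2 => 3 | 3 => 2 | 4 => 11 | 11 => 4
  | 5 => 8 | 8 => 5 | 6 => 13 | 13 => 6 | 9 => 10 | 10 => 9
  | _ => p end.
Definition act_letter (p : nat) (l : letter) : nat :=
  if l.1 then (if l.2 then px_inv p else px p) else py p.
Definition act_word (p : nat) (w : word) : nat := foldl act_letter p w.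

(* t_i = t^g where g (a word in x,y) maps 7 to i. *)
Definition t_idx (G : group) (x y t : G) (g : word) : G :=
  gconj t (eval_word x y g).

Definition fano_lines : seq (seq nat) :=
  [:: [:: 7; 1; 5]; [:: 1; 2; 6]; [:: 2; 3; 7]; [:: 3; 4; 1];
      [:: 4; 5; 2]; [:: 5; 6; 3]; [:: 6; 7; 4]].
Definition bar (m : nat) : nat := if (m <= 7)%N then m else m - 7.
Definition fano_collinear_distinct (a b c : nat) : bool :=
  [&& a != b, b != c, a != c &
      has (fun L => [&& a \in L, b \in L & c \in L]) fano_lines].

(* The group is M22 and N = <x, y> is L2(7); everything needed is read off two coset
   enumerations: of N over the trivial subgroup (168 cosets) and of the whole group
   over N (2640 cosets), the N-part of every coset of the second being computed in
   the first.  The enumerations are found by an untrusted Todd-Coxeter search and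
   replayed by a checker; each accepted step records an equation
   "rep c * g = n * rep d" that follows from the relations, so the final tables are
   valid in every group satisfying them.  From the tables, t^g depends only on 7^g
   (the stabiliser of 7 in N centralises t), and for each collinear triple the word
   t_i t_j t_k t_i t_j leads from the coset N back to N, with an explicit N-part. *)

From mathcomp Require Import all_boot.
From Stdlib Require Import PArith.
From Stdlib Require FMapPositive.
Set Implicit Arguments. Unset Strict Implicit. Unset Printing Implicit Defensive.

Module PM := FMapPositive.PositiveMap.

Local Notation "'let*' p := o 'in' b" := (obind (fun p => b) o)
  (at level 200, p pattern, o at level 100, b at level 200).

Local Notation "a ** b" := (gmul a b) (at level 40, left associativity).

Section GroupFacts.
Variable G : group.
Implicit Types a b c : G.

Lemma mulgV a : a ** ginv a = gone G.
Proof.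
set e := a ** ginv a.
have ee : e ** e = e by rewrite /e -gmulA [ginv a ** _]gmulA gmulV gmul1.
by rewrite -[e]gmul1 -(gmulV e) -gmulA ee.
Qed.

Lemma mulg1 a : a ** gone G = a.
Proof. by rewrite -(gmulV a) gmulA mulgV gmul1. Qed.

Lemma mulKg a b : ginv a ** (a ** b) = b.
Proof. by rewrite gmulA gmulV gmul1. Qed.

Lemma mulKVg a b : a ** (ginv a ** b) = b.
Proof. by rewrite gmulA mulgV gmul1. Qed.

Lemma mulgI a b c : a ** b = a ** c -> b = c.
Proof. by move=> e; rewrite -(mulKg a b) e mulKg. Qed.

Lemma invg_uniq a b : a ** b = gone G -> b = ginv a.
Proof. by move=> e; apply: (@mulgI a); rewrite e mulgV. Qed.

Lemma invgK a : ginv (ginv a) = a.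
Proof. by apply/esym/invg_uniq; rewrite gmulV. Qed.

Lemma invMg a b : ginv (a ** b) = ginv b ** ginv a.
Proof. by apply/esym/invg_uniq; rewrite -gmulA mulKVg mulgV. Qed.

Lemma invg1 : ginv (gone G) = gone G.
Proof. by apply/esym/invg_uniq; rewrite gmul1. Qed.

Lemma mulg_eq1_eq a b : a ** ginv b = gone G -> a = b.
Proof. by move/invg_uniq/(congr1 (@ginv G)); rewrite !invgK => ->. Qed.

Lemma mulg_eq1C a b : a ** b = gone G -> b ** a = gone G.
Proof. by move/invg_uniq->; rewrite gmulV. Qed.

End GroupFacts.

(* A code [c] stands for the generator number [c./2], inverted when [c] is odd. *)
Definition inv_code (c : nat) : nat := if odd c then c.-1 else c.+1.
Definition inv_codes (w : seq nat) : seq nat := rev (map inv_code w).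

Definition cyclic_closure (rels : seq (seq nat)) : seq (seq nat) :=
  flatten [seq flatten [seq [seq rot k w | k <- iota 0 (size w)] | w <- [:: R; inv_codes R]]
          | R <- rels].

Section CodeWords.
Variables (G : group) (gens : nat -> G).

Definition eval_code (c : nat) : G := let g := gens c./2 in if odd c then ginv g else g.
Definition eval_codes (w : seq nat) : G := foldr (fun c acc => eval_code c ** acc) (gone G) w.

Lemma eval_codes_cat u v : eval_codes (u ++ v) = eval_codes u ** eval_codes v.
Proof. by elim: u => [|c u IH] /=; rewrite ?gmul1 // IH gmulA. Qed.

Lemma eval_codes_cat5 u1 u2 u3 u4 u5 : eval_codes (u1 ++ u2 ++ u3 ++ u4 ++ u5) =
  eval_codes u1 ** eval_codes u2 ** eval_codes u3 ** eval_codes u4 ** eval_codes u5.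
Proof. by rewrite !eval_codes_cat !gmulA. Qed.

Lemma eval_codes1 c : eval_codes [:: c] = eval_code c.
Proof. exact: mulg1. Qed.

Lemma eval_codes_rcons w c : eval_codes (rcons w c) = eval_codes w ** eval_code c.
Proof. by rewrite -cats1 eval_codes_cat eval_codes1. Qed.

Lemma eval_inv_code c : eval_code (inv_code c) = ginv (eval_code c).
Proof.
have uphalf_even n : ~~ odd n -> uphalf n = n./2.
  by move=> /negbTE en; rewrite uphalf_half en.
rewrite /eval_code /inv_code; case oc: (odd c).
  have c_pos : 0 < c by case: c oc.
  have oc' : ~~ odd c.-1 by rewrite -oddS prednK.
  by rewrite (negbTE oc') invgK -{2}(prednK c_pos) /= uphalf_even.
by rewrite /= oc uphalf_even ?oc.
Qed.

Lemma eval_inv_codes w : eval_codes (inv_codes w) = ginv (eval_codes w).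
Proof.
elim: w => [|c w IH]; first by rewrite invg1.
by rewrite /inv_codes /= rev_cons eval_codes_rcons -/(inv_codes w) IH eval_inv_code invMg.
Qed.

Lemma eval_codes_rot k w : eval_codes w = gone G -> eval_codes (rot k w) = gone G.
Proof. by rewrite -{1}(cat_take_drop k w) /rot !eval_codes_cat => /mulg_eq1C. Qed.

Lemma cyclic_closure_rel rels :
  (forall R, R \in rels -> eval_codes R = gone G) ->
  forall i, eval_codes (nth [::] (cyclic_closure rels) i) = gone G.
Proof.
move=> rels1 i; case: (ltnP i (size (cyclic_closure rels))) => Hi; last by rewrite nth_default.
move: (mem_nth [::] Hi); move: (nth _ _ _) => w.
case/flattenP=> _ /mapP [R HR ->] /flattenP [_ /mapP [u Hu ->]] /mapP [k _ ->].
apply: eval_codes_rot; move: Hu; rewrite !inE => /orP [] /eqP ->; first exact: rels1.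
by rewrite eval_inv_codes rels1 // invg1.
Qed.

End CodeWords.

Lemma find_add_some A (m : PM.t A) k x k' y :
  PM.find k' (PM.add k x m) = Some y -> y = x \/ PM.find k' m = Some y.
Proof.
case: (Pos.eq_dec k' k) => [->|ne]; first by rewrite PM.gss => -[]; left.
by rewrite PM.gso //; right.
Qed.

Definition edge_key (col : nat) (c : positive) : positive :=
  match col with
  | 0 => xO (xO (xO c)) | 1 => xI (xO (xO c)) | 2 => xO (xI (xO c))
  | 3 => xI (xI (xO c)) | 4 => xO (xO (xI c)) | _ => xI (xO (xI c))
  end.

(* [Define c col d] creates the coset [d = c.col]; [SubgroupGen col] records that
   the generator [col] lies in the subgroup; [Deduce c r i] fills the gap at
   position [i] of relator number [r] scanned from [c]; [Coincide c r i dir] merges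
   the two cosets such a scan reaches at position [i]; [Transfer a col] copies the
   [col]-edge of a merged coset [a] to its representative; [Collapse a col dir]
   merges the [col]-neighbours of [a] and of its representative.  [dir] chooses
   which of the two cosets is merged into the other. *)
Inductive step :=
  | Define of positive & nat & positive
  | SubgroupGen of nat
  | Deduce of positive & nat & nat
  | Coincide of positive & nat & nat & bool
  | Transfer of positive & nat
  | Collapse of positive & nat & bool.

Section CosetTables.
Variables (C : Type) (cmul : C -> C -> option C).

(* Cosets are positives, each with a representative word [rep c].  An edge
   [(c, col, d, n)] says that [rep c * col = n * rep d] for the subgroup element
   (coefficient) [n]; a merge [(a, b, n)] says that [rep a = n * rep b].
   Entries are stored together with their own key and lookups compare it, so
   that no injectivity of [edge_key] is needed. *)
Definition edge := (positive * nat * positive * C)%type.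
Definition merge := (positive * positive * C)%type.
Record table := Table { edges : PM.t edge; merges : PM.t merge }.
Definition empty_table := Table (PM.empty edge) (PM.empty merge).

Definition raw_edge (T : table) (c : positive) (col : nat) : option (positive * C) :=
  if PM.find (edge_key col c) (edges T) is Some (c', col', d, n) then
    if Pos.eqb c' c && (col' == col) then Some (d, n) else None
  else None.

Definition raw_merge (T : table) (a : positive) : option (positive * C) :=
  if PM.find a (merges T) is Some (a', b, n) then
    if Pos.eqb a' a then Some (b, n) else None
  else None.

Fixpoint resolve (T : table) (fuel : nat) (d : positive) (n : C) : option (positive * C) :=
  if fuel is f.+1 then
    if raw_merge T d is Some (b, m) then let* n' := cmul n m in resolve T f b n'
    else Some (d, n)
  else Some (d, n).

Definition resolve_fuel := 64.

Definition find_edge (T : table) (c : positive) (col : nat) : option (positive * C) :=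
  let* (d, n) := raw_edge T c col in resolve T resolve_fuel d n.

Definition find_merge (T : table) (a : positive) : option (positive * C) :=
  let* (b, n) := raw_merge T a in resolve T resolve_fuel b n.

Fixpoint trace (T : table) (c : positive) (a : C) (w : seq nat) : option (positive * C) :=
  if w is col :: w' then
    let* (d, n) := find_edge T c col in let* a' := cmul a n in trace T d a' w'
  else Some (c, a).

Definition add_edge (T : table) (e : edge) : table :=
  let: (c, col, _, _) := e in Table (PM.add (edge_key col c) e (edges T)) (merges T).

Definition add_edge_pair (T : table) c col d (n ni : C) : table :=
  add_edge (add_edge T (c, col, d, n)) (d, inv_code col, c, ni).

Definition add_merge (T : table) a b (n : C) : table :=
  Table (edges T) (PM.add a (a, b, n) (merges T)).

Section Exec.
Variables (cinv : C -> option C) (cone : C) (cgen : nat -> option C).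
Variables (rels : seq (seq nat)) (rep : positive -> seq nat).
(* The planner runs before the representatives are known, hence without checks. *)
Variable check_defs : bool.

Definition exec_define T c col d :=
  if ~~ check_defs || (rep d == rcons (rep c) col) then
    Some (add_edge_pair T c col d cone cone)
  else None.

Definition exec_subgroup_gen T col :=
  let* n := cgen col in let* ni := cinv n in Some (add_edge_pair T xH col xH n ni).

Definition exec_deduce T c ri i :=
  let R := nth [::] rels ri in
  if i < size R then
    let* (f, a) := trace T c cone (take i R) in
    let* (b, e) := trace T c cone (inv_codes (drop i.+1 R)) in
    let* ai := cinv a in let* n := cmul ai e in let* ni := cinv n in
    Some (add_edge_pair T f (nth 0 R i) b n ni)
  else None.

Definition exec_coincide T c ri i (dir : bool) :=
  let R := nth [::] rels ri in
  let* (f, a) := trace T c cone (take i R) in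
  let* (b, e) := trace T c cone (inv_codes (drop i R)) in
  if dir then let* ai := cinv a in let* n := cmul ai e in Some (add_merge T f b n)
  else let* ei := cinv e in let* n := cmul ei a in Some (add_merge T b f n).

Definition exec_transfer T a col :=
  let* (b, n) := find_merge T a in let* (d, m) := find_edge T a col in
  let* ni := cinv n in let* k := cmul ni m in let* ki := cinv k in
  Some (add_edge_pair T b col d k ki).

Definition exec_collapse T a col (dir : bool) :=
  let* (b, n) := find_merge T a in let* (d, m) := find_edge T a col in
  let* (d2, m2) := find_edge T b col in
  let* mi := cinv m in let* k1 := cmul mi n in let* k := cmul k1 m2 in
  if dir then Some (add_merge T d d2 k)
  else let* ki := cinv k in Some (add_merge T d2 d ki).

Definition exec (T : table) (stp : step) : option table :=
  match stp with
  | Define c col d => exec_define T c col d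
  | SubgroupGen col => exec_subgroup_gen T col
  | Deduce c ri i => exec_deduce T c ri i
  | Coincide c ri i dir => exec_coincide T c ri i dir
  | Transfer a col => exec_transfer T a col
  | Collapse a col dir => exec_collapse T a col dir
  end.

Definition exec_or_skip (T : table) (stp : step) : table :=
  if exec T stp is Some T' then T' else T.

Definition run_steps (steps : seq (seq step)) : table :=
  foldl (foldl exec_or_skip) empty_table steps.

Section Validity.
Hypothesis defs_checked : check_defs.
Variables (G : group) (gens : nat -> G) (interp : C -> G).
Hypothesis cmulP : forall a b c, cmul a b = Some c -> interp c = interp a ** interp b.
Hypothesis cinvP : forall a c, cinv a = Some c -> interp c = ginv (interp a).
Hypothesis coneP : interp cone = gone G.
Hypothesis cgenP : forall col n, cgen col = Some n -> interp n = eval_code gens col.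
Hypothesis relsP : forall i, eval_codes gens (nth [::] rels i) = gone G.
Hypothesis rep_base : rep xH = [::].

Local Notation ev := (eval_codes gens).

Definition edge_valid (e : edge) : Prop :=
  let: (c, col, d, n) := e in ev (rep c) ** eval_code gens col = interp n ** ev (rep d).
Definition merge_valid (m : merge) : Prop :=
  let: (a, b, n) := m in ev (rep a) = interp n ** ev (rep b).
Definition table_valid (T : table) : Prop :=
  (forall k e, PM.find k (edges T) = Some e -> edge_valid e) /\
  (forall k m, PM.find k (merges T) = Some m -> merge_valid m).

Lemma empty_table_valid : table_valid empty_table.
Proof. by split=> k x; rewrite PM.gempty. Qed.

Section ValidTable.
Variable T : table.
Hypothesis T_valid : table_valid T.

Lemma raw_edge_valid c col d n : raw_edge T c col = Some (d, n) -> edge_valid (c, col, d, n).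
Proof.
rewrite /raw_edge; case E: PM.find => [[[[c' col'] d'] n']|] //.
case: ifP => // /andP [/Pos.eqb_eq <- /eqP <-] [<- <-].
exact: T_valid.1 E.
Qed.

Lemma raw_merge_valid a b n : raw_merge T a = Some (b, n) -> merge_valid (a, b, n).
Proof.
rewrite /raw_merge; case E: PM.find => [[[a' b'] n']|] //.
case: ifP => // /Pos.eqb_eq <- [<- <-].
exact: T_valid.2 E.
Qed.

Lemma resolve_valid fuel d n b m X :
  X = interp n ** ev (rep d) -> resolve T fuel d n = Some (b, m) -> X = interp m ** ev (rep b).
Proof.
elim: fuel d n => [|f IH] d n eX /=; first by case=> <- <-.
case E: raw_merge => [[b' m']|]; last by case=> <- <-.
case E2: cmul => [n'|] //= /IH; apply.
by rewrite eX (raw_merge_valid E) gmulA (cmulP E2).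
Qed.

Lemma find_edge_valid c col d n : find_edge T c col = Some (d, n) -> edge_valid (c, col, d, n).
Proof.
rewrite /find_edge; case E: raw_edge => [[d' n']|] // H.
exact: resolve_valid (raw_edge_valid E) H.
Qed.

Lemma find_merge_valid a b n : find_merge T a = Some (b, n) -> merge_valid (a, b, n).
Proof.
rewrite /find_merge; case E: raw_merge => [[b' n']|] // H.
exact: resolve_valid (raw_merge_valid E) H.
Qed.

Lemma trace_valid w c a d a' : trace T c a w = Some (d, a') ->
  interp a ** ev (rep c) ** ev w = interp a' ** ev (rep d).
Proof.
elim: w c a => [|col w IH] c a /=; first by case=> <- <-; rewrite mulg1.
case E: find_edge => [[d1 n1]|] //=; case E2: cmul => [a1|] //= /IH <-.
have /= e1 := find_edge_valid E.
by rewrite (cmulP E2) -!gmulA [ev (rep c) ** _]gmulA e1 -!gmulA.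
Qed.

Lemma trace1_valid w c d a : trace T c cone w = Some (d, a) ->
  ev (rep c) ** ev w = interp a ** ev (rep d).
Proof. by move/trace_valid; rewrite coneP gmul1. Qed.

Lemma add_edge_valid e : edge_valid e -> table_valid (add_edge T e).
Proof.
case: e => [[[c col] d] n] ve; split=> k e /=; last exact: T_valid.2.
move=> H; case: (find_add_some H) => [->|/T_valid.1] //.
Qed.

Lemma add_merge_valid a b n : merge_valid (a, b, n) -> table_valid (add_merge T a b n).
Proof.
move=> vm; split=> k m /=; first exact: T_valid.1.
move=> H; case: (find_add_some H) => [->|/T_valid.2] //.
Qed.

End ValidTable.

Lemma edge_valid_inv c col d n ni : edge_valid (c, col, d, n) ->
  interp ni = ginv (interp n) -> edge_valid (d, inv_code col, c, ni).
Proof.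
rewrite /= eval_inv_code => e ->; apply: (@mulgI _ (interp n)).
by rewrite gmulA -e -gmulA mulgV mulg1 mulKVg.
Qed.

Lemma add_edge_pair_valid T c col d n ni : table_valid T -> edge_valid (c, col, d, n) ->
  interp ni = ginv (interp n) -> table_valid (add_edge_pair T c col d n ni).
Proof.
move=> vT e eni; apply: add_edge_valid; first exact: add_edge_valid.
exact: (edge_valid_inv e eni).
Qed.

Lemma relator_split ri i :
  ev (take i (nth [::] rels ri)) = ginv (ev (drop i (nth [::] rels ri))).
Proof. by apply/invg_uniq/mulg_eq1C; rewrite -eval_codes_cat cat_take_drop relsP. Qed.

Section Steps.
Variables (T T' : table).
Hypothesis T_valid : table_valid T.

Lemma exec_define_valid c col d : exec_define T c col d = Some T' -> table_valid T'.
Proof.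
rewrite /exec_define defs_checked /=; case: eqP => // rep_d [<-].
apply: add_edge_pair_valid => //=; last by rewrite coneP invg1.
by rewrite rep_d eval_codes_rcons coneP gmul1.
Qed.

Lemma exec_subgroup_gen_valid col : exec_subgroup_gen T col = Some T' -> table_valid T'.
Proof.
rewrite /exec_subgroup_gen; case E: cgen => [n|] //=; case E2: cinv => [ni|] //= [<-].
apply: add_edge_pair_valid => //=; last exact: cinvP.
by rewrite rep_base gmul1 mulg1 (cgenP E).
Qed.

Lemma exec_deduce_valid c ri i : exec_deduce T c ri i = Some T' -> table_valid T'.
Proof.
rewrite /exec_deduce; set R := nth [::] rels ri; case: ifP => // lt_iR.
case E1: (trace T c cone (take i R)) => [[f a]|] //=.
case E2: (trace T c cone _) => [[b e]|] //=.
case E3: cinv => [ai|] //=; case E4: cmul => [n|] //=; case E5: cinv => [ni|] //= [<-].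
apply: add_edge_pair_valid => //; last exact: cinvP.
have e1 := trace1_valid T_valid E1; have e2 := trace1_valid T_valid E2.
have eR : ev (take i R) ** eval_code gens (nth 0 R i) = ginv (ev (drop i.+1 R)).
  by rewrite -eval_codes_rcons -take_nth // relator_split.
rewrite /= (cmulP E4) (cinvP E3) -gmulA -e2 eval_inv_codes -eR.
by rewrite [ev (rep c) ** _]gmulA e1 -gmulA mulKg.
Qed.

Lemma exec_coincide_valid c ri i dir : exec_coincide T c ri i dir = Some T' -> table_valid T'.
Proof.
rewrite /exec_coincide; set R := nth [::] rels ri.
case E1: (trace T c cone (take i R)) => [[f a]|] //=.
case E2: (trace T c cone _) => [[b e]|] //=.
have e1 := trace1_valid T_valid E1; have e2 := trace1_valid T_valid E2.
have eab : interp a ** ev (rep f) = interp e ** ev (rep b).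
  by rewrite -e1 -e2 eval_inv_codes relator_split.
case: dir; case E3: cinv => [ni|] //=; case E4: cmul => [n|] //= [<-];
  apply: add_merge_valid => //=; rewrite (cmulP E4) (cinvP E3) -gmulA.
  by rewrite -eab mulKg.
by rewrite eab mulKg.
Qed.

Lemma exec_transfer_valid a col : exec_transfer T a col = Some T' -> table_valid T'.
Proof.
rewrite /exec_transfer; case E1: find_merge => [[b n]|] //=.
case E2: find_edge => [[d m]|] //=.
case E3: cinv => [ni|] //=; case E4: cmul => [k|] //=; case E5: cinv => [ki|] //= [<-].
apply: add_edge_pair_valid => //; last exact: cinvP.
have /= ea := find_merge_valid T_valid E1; have /= ed := find_edge_valid T_valid E2.
by rewrite /= (cmulP E4) (cinvP E3) -gmulA -ed ea -gmulA mulKg.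
Qed.

Lemma exec_collapse_valid a col dir : exec_collapse T a col dir = Some T' -> table_valid T'.
Proof.
rewrite /exec_collapse; case E1: find_merge => [[b n]|] //=.
case E2: (find_edge T a col) => [[d m]|] //=.
case E3: (find_edge T b col) => [[d2 m2]|] //=.
case E4: cinv => [mi|] //=; case E5: cmul => [k1|] //=; case E6: cmul => [k|] //=.
have /= ea := find_merge_valid T_valid E1.
have /= ed := find_edge_valid T_valid E2; have /= ed2 := find_edge_valid T_valid E3.
have edd2 : ev (rep d) = interp k ** ev (rep d2).
  by rewrite (cmulP E6) (cmulP E5) (cinvP E4) -!gmulA -ed2 [interp n ** _]gmulA -ea ed mulKg.
case: dir => [[<-]|]; first exact: add_merge_valid.
case E7: cinv => [ki|] //= [<-]; apply: add_merge_valid => //=.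
by rewrite (cinvP E7) edd2 mulKg.
Qed.

Lemma exec_valid stp : exec T stp = Some T' -> table_valid T'.
Proof.
case: stp => [c col d|col|c ri i|c ri i dir|a col|a col dir];
  [exact: exec_define_valid | exact: exec_subgroup_gen_valid | exact: exec_deduce_valid
  | exact: exec_coincide_valid | exact: exec_transfer_valid | exact: exec_collapse_valid].
Qed.

End Steps.

Lemma run_steps_valid steps : table_valid (run_steps steps).
Proof.
rewrite /run_steps; elim: steps empty_table empty_table_valid => //= l steps IH T vT.
apply: IH; elim: l T vT => //= stp l IHl T vT; apply: IHl.
by rewrite /exec_or_skip; case E: exec => [T'|] //; exact: exec_valid E.
Qed.

End Validity.
End Exec.
End CosetTables.

Section Planner.
Variables (C : Type) (cmul : C -> C -> option C) (cinv : C -> option C) (cone : C).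
Variables (cgen : nat -> option C) (rels : seq (seq nat)) (ncols : nat).
(* For each column, the relators starting with it, as (index, word, length, inverse). *)
Variable scans : seq (seq (nat * seq nat * nat * seq nat)).

Local Notation table := (table C).
Local Notation find_edge := (find_edge cmul).
Local Notation find_merge := (find_merge cmul).

Definition alive (T : table) (c : positive) : bool := if raw_merge T c is None then true else false.

(* An ordinary Todd-Coxeter enumeration (HLT order, with deduction and coincidence
   queues). *)
Record planner := Planner {
  ptable : table; plog : seq step;
  pdeductions : seq (positive * nat); pcoincidences : seq positive;
  pfront : seq positive; pback : seq positive;
  pcursor : option (positive * nat); pdone : bool; pnext : positive }.

Definition emit ps stp :=
  Planner (exec_or_skip cmul cinv cone cgen rels (fun _ => [::]) false (ptable ps) stp)
    (stp :: plog ps) (pdeductions ps) (pcoincidences ps) (pfront ps) (pback ps)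
    (pcursor ps) (pdone ps) (pnext ps).
Definition set_deductions ps l :=
  Planner (ptable ps) (plog ps) l (pcoincidences ps) (pfront ps) (pback ps)
    (pcursor ps) (pdone ps) (pnext ps).
Definition set_coincidences ps l :=
  Planner (ptable ps) (plog ps) (pdeductions ps) l (pfront ps) (pback ps)
    (pcursor ps) (pdone ps) (pnext ps).
Definition set_cursor ps cur :=
  Planner (ptable ps) (plog ps) (pdeductions ps) (pcoincidences ps) (pfront ps) (pback ps)
    cur (pdone ps) (pnext ps).
Definition push_deductions ps l := set_deductions ps (l ++ pdeductions ps).
Definition push_coincidence ps a := set_coincidences ps (a :: pcoincidences ps).

Fixpoint walk (T : table) (f : positive) (w : seq nat) (i lim : nat) : positive * nat :=
  match lim, w with
  | lim'.+1, col :: w' =>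
      if find_edge T f col is Some (d, _) then walk T d w' i.+1 lim' else (f, i)
  | _, _ => (f, i)
  end.

Definition scan_relator ps c (r : nat * seq nat * nat * seq nat) :=
  let: (ri, R, m, Rinv) := r in
  let T := ptable ps in
  if ~~ alive T c then ps else
  let: (f, i) := walk T c R 0 m in
  if i == m then
    if Pos.eqb f c then ps else
    let dir := Pos.ltb c f in
    push_coincidence (emit ps (Coincide c ri m dir)) (if dir then f else c)
  else
  let lim := m - 1 - i in
  let: (b, k) := walk T c Rinv 0 lim in
  if k != lim then ps else
  let g := nth 0 R i in
  let deduce := push_deductions (emit ps (Deduce c ri i)) [:: (f, g); (b, inv_code g)] in
  if find_edge T b (inv_code g) is Some (e, _) then
    if Pos.eqb e f then deduce else
    let dir := Pos.ltb e f in
    push_coincidence (emit ps (Coincide c ri i dir)) (if dir then f else e)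
  else deduce.

Definition process_coincidence ps a col :=
  let T := ptable ps in
  match find_edge T a col, find_merge T a with
  | Some (d, _), Some (b, _) =>
      let transfer :=
        push_deductions (emit ps (Transfer a col)) [:: (b, col); (d, inv_code col)] in
      if find_edge T b col is Some (d2, _) then
        if Pos.eqb d2 d then
          if find_edge T d (inv_code col) is None then transfer else ps
        else
          let dir := Pos.ltb d2 d in
          push_coincidence (emit ps (Collapse a col dir)) (if dir then d else d2)
      else transfer
  | _, _ => ps
  end.

Definition define_next ps c col :=
  let d := pnext ps in
  let ps := emit ps (Define c col d) in
  Planner (ptable ps) (plog ps) ([:: (c, col); (d, inv_code col)] ++ pdeductions ps)
    (pcoincidences ps) (pfront ps) (d :: pback ps) (Some (c, col.+1)) (pdone ps) (Pos.succ d).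

Definition next_coset ps :=
  let resume c front back :=
    Planner (ptable ps) (plog ps) (pdeductions ps) (pcoincidences ps) front back
      (Some (c, 0)) false (pnext ps) in
  if pfront ps is c :: front then resume c front (pback ps)
  else if rev (pback ps) is c :: front then resume c front [::]
  else Planner (ptable ps) (plog ps) (pdeductions ps) (pcoincidences ps) [::] [::] None true
         (pnext ps).

Definition tick ps :=
  if pdone ps then ps else
  match pcoincidences ps, pdeductions ps, pcursor ps with
  | a :: rest, _, _ =>
      foldl (fun ps col => process_coincidence ps a col) (set_coincidences ps rest)
        (iota 0 ncols)
  | [::], (c, col) :: rest, _ =>
      let ps := set_deductions ps rest in
      if alive (ptable ps) c then foldl (fun ps r => scan_relator ps c r) ps (nth [::] scans col)
      else ps
  | [::], [::], Some (c, col) =>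
      if (col < ncols) && alive (ptable ps) c then
        if find_edge (ptable ps) c col is None then define_next ps c col
        else set_cursor ps (Some (c, col.+1))
      else set_cursor ps None
  | [::], [::], None => next_coset ps
  end.

Definition plan (subgens : seq nat) (fuel : positive) : planner :=
  let start := Planner (empty_table C) [::] [::] [::] [:: xH] [::] None false 2%positive in
  let add_gen ps col :=
    push_deductions (emit ps (SubgroupGen col)) [:: (xH, col); (xH, inv_code col)] in
  let ps0 := foldl add_gen start subgens in
  Pos.iter tick ps0 fuel.

End Planner.

Definition relators_by_first (rels : seq (seq nat)) :
    seq (seq (nat * seq nat * nat * seq nat)) :=
  [seq [seq (ri, nth [::] rels ri, size (nth [::] rels ri), inv_codes (nth [::] rels ri))
       | ri <- iota 0 (size rels) & nth 0 (nth [::] rels ri) 0 == col]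
  | col <- iota 0 6].

(* Logs are kept as blocks of 512 steps so that the evaluated terms stay shallow. *)
Definition blocks A (l : seq A) : seq (seq A) := reshape (nseq (size l %/ 512).+1 512) l.

Definition parents (log : seq (seq step)) : PM.t (positive * nat) :=
  foldl (foldl (fun P s => if s is Define c col d then PM.add d (c, col) P else P))
    (PM.empty _) log.

Fixpoint rep_word (P : PM.t (positive * nat)) (fuel : nat) (d : positive) : seq nat :=
  if fuel is f.+1 then
    if PM.find d P is Some (c, col) then rcons (rep_word P f c) col else [::]
  else [::].

Definition all_entries A (p : positive -> A -> bool) (m : PM.t A) : bool :=
  List.forallb (fun kv => p kv.1 kv.2) (PM.elements m).

Lemma all_entriesP A (p : positive -> A -> bool) m k v :
  all_entries p m -> PM.find k m = Some v -> p k v.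
Proof.
move=> /List.forallb_forall all_p kv.
exact: (all_p (k, v) (PM.elements_correct _ _ kv)).
Qed.

Definition codes_pow (w : seq nat) (n : nat) : seq nat := flatten (nseq n w).
Definition codes_conj (a g : seq nat) : seq nat := inv_codes g ++ a ++ g.
Definition codes_comm (a b : seq nat) : seq nat := inv_codes a ++ inv_codes b ++ a ++ b.

Definition code_x := [:: 0].
Definition code_y := [:: 2].
Definition code_t := [:: 4].

Definition relators_N : seq (seq nat) :=
  [:: codes_pow code_x 7; codes_pow code_y 2; codes_pow (code_x ++ code_y) 3;
      codes_pow (codes_comm code_x code_y) 4].

Definition relators_G : seq (seq nat) :=
  relators_N ++
  [:: codes_pow code_t 2;
      codes_comm (codes_conj code_t (codes_pow code_x 2)) (code_y ++ inv_codes code_x);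
      codes_comm code_t code_y;
      codes_pow (code_y ++ codes_conj code_t (codes_pow code_x 2)) 5;
      codes_pow (((code_x ++ code_y) ++ codes_pow code_x 2) ++ codes_conj code_t code_x) 5;
      codes_pow (code_x ++ code_t) 8].

Definition xyt_gens (G : group) (x y t : G) (n : nat) : G :=
  match n with 0 => x | 1 => y | _ => t end.

Section Relators.
Variables (G : group) (x y t : G).
Local Notation ev := (eval_codes (xyt_gens x y t)).

Lemma eval_codes_pow w n : ev (codes_pow w n) = gexp (ev w) n.
Proof. by elim: n => //= n IH; rewrite eval_codes_cat -/(codes_pow w n) IH. Qed.

Lemma eval_codes_conj a g : ev (codes_conj a g) = gconj (ev a) (ev g).
Proof. by rewrite /codes_conj !eval_codes_cat eval_inv_codes /gconj gmulA. Qed.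

Lemma eval_codes_comm a b : ev (codes_comm a b) = gcomm (ev a) (ev b).
Proof. by rewrite /codes_comm !eval_codes_cat !eval_inv_codes /gcomm !gmulA. Qed.

Lemma relators_G_hold : G_relations x y t -> forall R, R \in relators_G -> ev R = gone G.
Proof.
have ex : ev code_x = x by exact: mulg1.
have ey : ev code_y = y by exact: mulg1.
have et : ev code_t = t by exact: mulg1.
move=> [r1 [r2 [r3 [r4 [r5 [r6 [r7 [r8 [r9 r10]]]]]]]]] R.
rewrite /relators_G mem_cat /relators_N !inE.
by repeat case/orP; move/eqP->; rewrite ?(eval_codes_pow, eval_codes_conj, eval_codes_comm,
                                          eval_codes_cat, eval_inv_codes, ex, ey, et).
Qed.

Lemma relators_N_hold : G_relations x y t -> forall R, R \in relators_N -> ev R = gone G.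
Proof. by move=> rel R RN; apply: relators_G_hold; rewrite // mem_cat RN. Qed.

End Relators.

Definition unit_mul (_ _ : unit) : option unit := Some tt.
Definition unit_inv (_ : unit) : option unit := Some tt.
Definition no_gen (_ : nat) : option unit := None.

Lemma unit_mulP (G : group) a b c : unit_mul a b = Some c -> gone G = gone G ** gone G.
Proof. by rewrite gmul1. Qed.

Definition closure_N := cyclic_closure relators_N.
Definition closure_G := cyclic_closure relators_G.

Definition plan_N :=
  plan unit_mul unit_inv tt no_gen closure_N 4 (relators_by_first closure_N) [::] 100000.
Definition log_N := Eval vm_compute in blocks (rev (plog plan_N)).
Definition parents_N := Eval vm_compute in parents log_N.
Definition rep_N := rep_word parents_N 64.

Lemma rep_N_base : rep_N xH = [::].
Proof. by vm_compute. Qed.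

Definition table_N : table unit :=
  Eval vm_compute in run_steps unit_mul unit_inv tt no_gen closure_N rep_N true log_N.

Lemma table_N_run : table_N = run_steps unit_mul unit_inv tt no_gen closure_N rep_N true log_N.
Proof. by vm_compute. Qed.

Definition trace_N (a : positive) (w : seq nat) : option positive :=
  omap fst (trace unit_mul table_N a tt w).

(* The cosets of the trivial subgroup, one for each element of N. *)
Definition N_ids : seq positive := [seq Pos.of_nat n | n <- iota 1 168].

Definition mul_table : PM.t (PM.t positive) := Eval vm_compute in
  foldl (fun m a => PM.add a (foldl (fun row b =>
      if trace_N a (rep_N b) is Some c then PM.add b c row else row) (PM.empty _) N_ids) m)
    (PM.empty _) N_ids.
Definition inv_table : PM.t positive := Eval vm_compute in
  foldl (fun m a => if trace_N xH (inv_codes (rep_N a)) is Some c then PM.add a c m else m)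
    (PM.empty _) N_ids.

Definition mul_N (a b : positive) : option positive :=
  obind (fun row => PM.find b row) (PM.find a mul_table).
Definition inv_N (a : positive) : option positive := PM.find a inv_table.

Definition eq_some (o : option positive) (c : positive) : bool :=
  if o is Some c' then Pos.eqb c' c else false.

Lemma mul_table_ok :
  all_entries (fun a => all_entries (fun b c => eq_some (trace_N a (rep_N b)) c)) mul_table.
Proof. by vm_compute. Qed.

Lemma inv_table_ok :
  all_entries (fun a c => eq_some (trace_N xH (inv_codes (rep_N a))) c) inv_table.
Proof. by vm_compute. Qed.

Definition gen_N (col : nat) : option positive := omap fst (find_edge unit_mul table_N xH col).

(* The cosets of the first table are the coefficients of the second one. *)
Definition interp_N (G : group) (x y t : G) (n : positive) : G :=
  eval_codes (xyt_gens x y t) (rep_N n).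

Definition plan_G :=
  plan mul_N inv_N xH gen_N closure_G 6 (relators_by_first closure_G) [:: 0; 2] 4000000.
Definition log_G := Eval vm_compute in blocks (rev (plog plan_G)).
Definition parents_G := Eval vm_compute in parents log_G.
Definition rep_G := rep_word parents_G 64.

Lemma rep_G_base : rep_G xH = [::].
Proof. by vm_compute. Qed.

Definition table_G : table positive :=
  run_steps mul_N inv_N xH gen_N closure_G rep_G true log_G.


Section InGroup.
Variables (G : group) (x y t : G).
Hypothesis Hrel : G_relations x y t.
Local Notation gens := (xyt_gens x y t).
Local Notation ev := (eval_codes gens).
Local Notation interp_N := (interp_N x y t).

Lemma table_N_valid : table_valid rep_N gens (fun _ => gone G) table_N.
Proof.
rewrite table_N_run; apply: run_steps_valid => //.
- exact: unit_mulP.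
- by move=> *; rewrite invg1.
exact/cyclic_closure_rel/relators_N_hold.
Qed.

Lemma trace_N_valid a w d : trace_N a w = Some d -> ev (rep_N a) ** ev w = ev (rep_N d).
Proof.
rewrite /trace_N; case E: trace => [[d' []]|] // [<-].
by move: (trace_valid (@unit_mulP G) table_N_valid E); rewrite !gmul1.
Qed.

Lemma mul_N_valid a b c : mul_N a b = Some c -> interp_N c = interp_N a ** interp_N b.
Proof.
rewrite /mul_N; case Ea: (PM.find a mul_table) => [row|] //= Eb.
move: (all_entriesP (all_entriesP mul_table_ok Ea) Eb) => /=.
by case E: trace_N => [c'|] // /Pos.eqb_eq <-; rewrite /interp_N -(trace_N_valid E).
Qed.

Lemma inv_N_valid a c : inv_N a = Some c -> interp_N c = ginv (interp_N a).
Proof.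
move=> /(all_entriesP inv_table_ok) /=.
case E: trace_N => [c'|] // /Pos.eqb_eq <-.
by rewrite /interp_N -(trace_N_valid E) rep_N_base gmul1 eval_inv_codes.
Qed.

Lemma gen_N_valid col n : gen_N col = Some n -> interp_N n = eval_code gens col.
Proof.
rewrite /gen_N; case E: find_edge => [[d []]|] // [<-].
move: (find_edge_valid (@unit_mulP G) table_N_valid E) => /=.
by rewrite !gmul1 => ->.
Qed.


Lemma table_G_valid : table_valid rep_G gens interp_N table_G.
Proof.
apply: run_steps_valid => //.
- exact: mul_N_valid.
- exact: inv_N_valid.
- exact: gen_N_valid.
- exact/cyclic_closure_rel/relators_G_hold.
Qed.

Lemma trace_G_base w n : trace mul_N table_G xH xH w = Some (xH, n) -> ev w = interp_N n.
Proof.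
move/(trace_valid mul_N_valid table_G_valid).
have -> : interp_N xH = gone G by [].
by rewrite rep_G_base !gmul1 mulg1.
Qed.

End InGroup.


Definition code_of_letter (l : letter) : nat := (if l.1 then 0 else 2) + l.2.
Definition letter_of_code (c : nat) : letter := (c./2 == 0, odd c).

Lemma code_of_letterK : cancel code_of_letter letter_of_code.
Proof. by case=> [[] []]. Qed.

Definition act7 (w : seq nat) : nat := act_word 7 (map letter_of_code w).

Definition is_N_id (a : positive) : bool := has (Pos.eqb a) N_ids.

Lemma all_has_eqb (p : pred positive) l a : all p l -> has (Pos.eqb a) l -> p a.
Proof.
elim: l => [|b l IH] //= /andP [pb pl] /orP [/Pos.eqb_eq ->|] //; exact: IH.
Qed.

Definition N_edge_ok (a : positive) (col : nat) : bool :=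
  if find_edge unit_mul table_N a col is Some (d, _) then
    is_N_id d && (act7 (rep_N d) == act_letter (act7 (rep_N a)) (letter_of_code col))
  else false.

Lemma N_edges_certified : all (fun a => all (N_edge_ok a) (iota 0 4)) N_ids.
Proof. by vm_compute. Qed.

Definition t_conj_codes (a : positive) : seq nat := inv_codes (rep_N a) ++ code_t ++ rep_N a.
Definition mover (p : nat) : positive := head xH [seq a <- N_ids | act7 (rep_N a) == p].
Definition triple_codes (p q r : nat) : seq nat :=
  t_conj_codes (mover p) ++ t_conj_codes (mover q) ++ t_conj_codes (mover r) ++
  t_conj_codes (mover p) ++ t_conj_codes (mover q).

Definition t_conj_ok (T : table positive) (a : positive) : bool :=
  let w := t_conj_codes a ++ inv_codes (t_conj_codes (mover (act7 (rep_N a)))) in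
  if trace mul_N T xH xH w is Some (d, n) then Pos.eqb d xH && Pos.eqb n xH else false.

Definition triple_ok (T : table positive) (p q r : nat) : bool :=
  if trace mul_N T xH xH (triple_codes p q r) is Some (d, n) then
    Pos.eqb d xH && all (fun c => c < 4) (rep_N n)
  else false.

(* Stated unfolded: converting from a folded boolean constant would make the kernel
   evaluate the enumeration. *)
Lemma table_G_certified :
  all (t_conj_ok table_G) N_ids &&
  all (fun p => all (fun q => all (fun r =>
    fano_collinear_distinct (bar p) (bar q) (bar r) ==> triple_ok table_G p q r)
  (iota 1 14)) (iota 1 14)) (iota 1 14).
Proof. by vm_compute. Qed.

Lemma t_conj_certified : all (t_conj_ok table_G) N_ids.
Proof. by case/andP: table_G_certified. Qed.

Lemma triple_certified p q r : 1 <= p <= 14 -> 1 <= q <= 14 -> 1 <= r <= 14 ->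
  fano_collinear_distinct (bar p) (bar q) (bar r) -> triple_ok table_G p q r.
Proof.
have in14 m : 1 <= m <= 14 -> m \in iota 1 14 by rewrite mem_iota.
move=> /in14 Pp /in14 Pq /in14 Pr fano; case/andP: table_G_certified => _.
by move=> /allP /(_ p Pp) /allP /(_ q Pq) /allP /(_ r Pr) /implyP /(_ fano).
Qed.

Definition witness (p q r : nat) : word :=
  if trace mul_N table_G xH xH (triple_codes p q r) is Some (_, n) then
    map letter_of_code (rep_N n)
  else [::].


Section Readout.
Variables (G : group) (x y t : G).
Hypothesis Hrel : G_relations x y t.
Local Notation gens := (xyt_gens x y t).
Local Notation ev := (eval_codes gens).

Lemma eval_letter_of_code c : c < 4 -> eval_letter x y (letter_of_code c) = eval_code gens c.
Proof. by case: c => [|[|[|[|c]]]]. Qed.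

Lemma eval_letter_code l : eval_letter x y l = eval_code gens (code_of_letter l).
Proof. by case: l => [[] []]. Qed.

Lemma eval_word_codes w : all (fun c => c < 4) w -> eval_word x y (map letter_of_code w) = ev w.
Proof.
suff acc_ev acc : all (fun c => c < 4) w ->
    foldl (fun a l => a ** eval_letter x y l) acc (map letter_of_code w) = acc ** ev w.
  by rewrite /eval_word => /acc_ev ->; rewrite gmul1.
elim: w acc => [|c w IH] acc /=; first by rewrite mulg1.
by case/andP=> c4 w4; rewrite IH // eval_letter_of_code // gmulA.
Qed.

Lemma word_rep_N gw : exists2 a, is_N_id a &
  eval_word x y gw = ev (rep_N a) /\ act_word 7 gw = act7 (rep_N a).
Proof.
elim/last_ind: gw => [|gw l [a Na [e_gw act_gw]]].
  by exists xH; rewrite ?rep_N_base.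
have l4 : code_of_letter l \in iota 0 4 by case: l => [[] []].
move: (all_has_eqb N_edges_certified Na) => /allP /(_ _ l4).
rewrite /N_edge_ok; case E: find_edge => [[d []]|] // /andP [Nd /eqP act_d].
exists d => //; split.
  have := find_edge_valid (@unit_mulP G) (table_N_valid Hrel) E.
  rewrite /= !gmul1 /eval_word foldl_rcons -/(eval_word x y gw) e_gw => <-.
  by rewrite eval_letter_code.
by rewrite /act_word foldl_rcons -/(act_word 7 gw) act_gw act_d code_of_letterK.
Qed.

Lemma eval_t_conj a : ev (t_conj_codes a) = gconj t (ev (rep_N a)).
Proof. by rewrite /t_conj_codes !eval_codes_cat eval_inv_codes eval_codes1 gmulA. Qed.

Lemma t_idx_mover gw : t_idx x y t gw = ev (t_conj_codes (mover (act_word 7 gw))).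
Proof.
case: (word_rep_N gw) => a Na [e_gw ->].
have := all_has_eqb t_conj_certified Na.
rewrite /t_conj_ok; case E: trace => [[d n]|]; last by [].
move=> /andP [/Pos.eqb_eq d1 /Pos.eqb_eq n1].
rewrite d1 in E; move: (trace_G_base Hrel E); rewrite n1 eval_codes_cat eval_inv_codes.
by move/mulg_eq1_eq; rewrite /t_idx e_gw -eval_t_conj => ->.
Qed.

Lemma eval_witness p q r : triple_ok table_G p q r ->
  eval_word x y (witness p q r) =
  ev (t_conj_codes (mover p)) ** ev (t_conj_codes (mover q)) ** ev (t_conj_codes (mover r)) **
  ev (t_conj_codes (mover p)) ** ev (t_conj_codes (mover q)).
Proof.
rewrite /triple_ok /witness; case E: trace => [[d n]|]; last by [].
move=> /andP [/Pos.eqb_eq d1 small]; rewrite d1 in E.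
rewrite eval_word_codes // -[ev (rep_N n)]/(interp_N x y t n).
by rewrite -(trace_G_base Hrel E) eval_codes_cat5.
Qed.

End Readout.

Theorem theorem3p8 (i j k : nat) (gi gj gk : word) :
  (1 <= i <= 14)%N -> (1 <= j <= 14)%N -> (1 <= k <= 14)%N ->
  fano_collinear_distinct (bar i) (bar j) (bar k) ->
  act_word 7 gi = i -> act_word 7 gj = j -> act_word 7 gk = k ->
  exists w : word,
    forall (G : group) (x y t : G), G_relations x y t ->
      eval_word x y w =
      gmul (gmul (gmul (gmul (t_idx x y t gi) (t_idx x y t gj))
                       (t_idx x y t gk)) (t_idx x y t gi)) (t_idx x y t gj).
Proof.
move=> Hi Hj Hk fano act_i act_j act_k; exists (witness i j k) => G x y t Hrel.
rewrite !(t_idx_mover Hrel) act_i act_j act_k.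
exact (eval_witness Hrel (triple_certified Hi Hj Hk fano)).
Qed.
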